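(* Let $G$ be an ADMG on $n$ vertices, and suppose there are $m$ distinct vertex subsets $V_1,\dots,V_m$ with $|V_i|=3$ such that for each $i$ the vertices of $V_i$ can be ordered as $(a_i,b_i,c_i)$ so that $G$ contains the edges $a_i\to b_i$, $b_i\to c_i$ and $b_i\leftrightarrow c_i$. Then $|\mathrm{MEC}(G)|\ge 2^{m/(3n)}$.
   Context: An ADMG (acyclic directed mixed graph) has directed edges $v\to w$ forming no directed cycle and bidirected edges $v\leftrightarrow w$, $v\ne w$. Markov equivalence is defined via d-separation: a path between $a\ne b$ is a sequence of vertices (repeats allowed) with specified edges (directed either way, or bidirected) between consecutive ones; an internal vertex is a collider if both adjacent path-edges have an arrowhead at it; the path is active given $Z$ if every internal non-collider is outside $Z$ and every collider is in $Z$ or has a descendant (itself or a vertex reachable by a directed path) in $Z$; $a,b$ are d-separated given $Z$ if no active path exists. Two graphs are Markov equivalent if they have the same d-separations. $\mathrm{MEC}(G)$ is the set of ADMGs on the same vertex set Markov equivalent to $G$. *)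

From HB Require Import structures.
From mathcomp Require Import all_boot all_order all_algebra.
From mathcomp Require Import boolp reals exp.
Set Implicit Arguments. Unset Strict Implicit. Unset Printing Implicit Defensive.

(* An ADMG on vertex set 'I_n : D = set of directed edges (u,w) meaning u -> w,
   B = set of bidirected edges, stored symmetrically: (u,w) \in B iff (w,u) \in B. *)
Definition dedge n (D : {set 'I_n * 'I_n}) : rel 'I_n := fun u w => (u, w) \in D.

Definition is_admg n (D B : {set 'I_n * 'I_n}) : Prop :=
  (* no directed cycle (also excludes directed self-loops) *)
  (forall u w, (u, w) \in D -> ~~ connect (dedge D) w u) /\
  (forall u w, (u, w) \in B -> u != w) /\
  (forall u w, (u, w) \in B -> (w, u) \in B).

(* kind of a path edge between consecutive vertices u, w:
   Fwd: u -> w, Bwd: u <- w, Bi: u <-> w *)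
Inductive ekind := Fwd | Bwd | Bi.

Definition edge_ok n (D B : {set 'I_n * 'I_n}) (k : ekind) (u w : 'I_n) : bool :=
  match k with
  | Fwd => (u, w) \in D
  | Bwd => (w, u) \in D
  | Bi => (u, w) \in B
  end.

Definition head_at_end (k : ekind) : bool := if k is Bwd then false else true.
Definition head_at_start (k : ekind) : bool := if k is Fwd then false else true.

(* A path (repeats allowed) from a to b: vertices vs = [v_0; ...; v_L],
   edges ks = [k_0; ...; k_{L-1}], k_i an edge of the graph between v_i and v_{i+1}. *)
Definition is_path n (D B : {set 'I_n * 'I_n}) (a b : 'I_n)
    (vs : seq 'I_n) (ks : seq ekind) : Prop :=
  size vs = (size ks).+1 /\
  nth a vs 0 = a /\ nth a vs (size ks) = b /\
  (forall i, i < size ks -> edge_ok D B (nth Fwd ks i) (nth a vs i) (nth a vs i.+1)).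

Definition collider (ks : seq ekind) (j : nat) : bool :=
  head_at_end (nth Fwd ks j.-1) && head_at_start (nth Fwd ks j).

Definition descendant n (D : {set 'I_n * 'I_n}) (v w : 'I_n) : bool :=
  connect (dedge D) v w.

Definition active_path n (D B : {set 'I_n * 'I_n}) (Z : {set 'I_n}) (a b : 'I_n)
    (vs : seq 'I_n) (ks : seq ekind) : Prop :=
  is_path D B a b vs ks /\
  forall j, 0 < j -> j < size ks ->
    if collider ks j
    then exists2 z, z \in Z & descendant D (nth a vs j) z
    else nth a vs j \notin Z.

Definition dsep n (D B : {set 'I_n * 'I_n}) (a b : 'I_n) (Z : {set 'I_n}) : Prop :=
  ~ exists vs ks, active_path D B Z a b vs ks.

Definition markov_equiv n (D B D' B' : {set 'I_n * 'I_n}) : Prop :=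
  forall (a b : 'I_n) (Z : {set 'I_n}), a != b -> (dsep D B a b Z <-> dsep D' B' a b Z).

Definition MEC n (D B : {set 'I_n * 'I_n}) : {set {set 'I_n * 'I_n} * {set 'I_n * 'I_n}} :=
  [set G' | `[< is_admg G'.1 G'.2 /\ markov_equiv D B G'.1 G'.2 >]].

From HB Require Import structures.
From mathcomp Require Import all_boot all_order all_algebra.
From mathcomp Require Import boolp reals exp.
Import Order.TTheory GRing.Theory Num.Theory.
Set Implicit Arguments. Unset Strict Implicit. Unset Printing Implicit Defensive.

(* If u -> v -> w and v <-> w, then the edge u -> w may be added or deleted without
   changing ancestry or any d-separation: an active path through u -> w is rerouted
   through u -> v -> w when v is not conditioned on, and through the collider
   u -> v <-> w otherwise.  Each triple (a, b, c) of the hypothesis makes (a, c) such a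
   shortcut pair, and at most n triples share a pair.  A greedy choice yields a set S of
   at least m / (3n) shortcut pairs whose shortcuts avoid S; then D \ S together with any
   subset of S is Markov equivalent to D, giving 2^|S| graphs in MEC(G). *)

Lemma cards3_le (T : finType) (a b c : T) : #|[set a; b; c]| <= 3.
Proof.
apply: leq_trans (leq_card_setU _ _) _; rewrite cards1 addn1 ltnS.
by apply: leq_trans (leq_card_setU _ _) _; rewrite !cards1.
Qed.

Section Graphs.
Variable n : nat.
Implicit Types (D B S Q T : {set 'I_n * 'I_n}) (Z : {set 'I_n}).

Definition acyclic D := forall u w, (u, w) \in D -> ~~ connect (dedge D) w u.

Lemma acyclicS D1 D2 : D1 \subset D2 -> acyclic D2 -> acyclic D1.
Proof.
move=> sD12 acyc2 u w /(subsetP sD12)/acyc2; apply: contra.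
by apply: connect_sub => x y /(subsetP sD12)/(connect1 (e := dedge D2)).
Qed.

Definition shortcut D B (u w : 'I_n) : bool :=
  [exists v, [&& (u, v) \in D, (v, w) \in D & (v, w) \in B]].

(* [h] is [None] at the first vertex of a walk; otherwise it tells whether the
   incoming edge has an arrowhead at [x]. *)
Definition pass_ok D Z (h : option bool) (k : ekind) (x : 'I_n) : Prop :=
  if h is Some hx then
    if hx && head_at_start k then exists2 z, z \in Z & descendant D x z
    else x \notin Z
  else True.

Fixpoint active_walk D B Z h (x b : 'I_n) (vs : seq 'I_n) (ks : seq ekind) : Prop :=
  match vs, ks with
  | [::], [::] => x = b
  | v :: vs, k :: ks => [/\ edge_ok D B k x v, pass_ok D Z h k x &
                          active_walk D B Z (Some (head_at_end k)) v b vs ks]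
  | _, _ => False
  end.

Lemma active_walkP D B Z (d b : 'I_n) ks : forall h x vs,
  active_walk D B Z h x b vs ks <->
  [/\ size vs = size ks,
      forall i, i < size ks ->
        edge_ok D B (nth Fwd ks i) (nth d (x :: vs) i) (nth d (x :: vs) i.+1),
      nth d (x :: vs) (size ks) = b &
      forall j, j < size ks ->
        pass_ok D Z (if j is j'.+1 then Some (head_at_end (nth Fwd ks j')) else h)
                (nth Fwd ks j) (nth d (x :: vs) j)].
Proof.
elim: ks => [|k ks IH] h x [|v vs] /=.
- by split=> [->|[]].
- by split=> [[]|[]].
- by split=> [[]|[]].
split=> [[e p /IH [s E N P]] | [[s] E N P]].
  split=> [|[|i] lt_i|//|[|j] lt_j] //=; first by rewrite s.
  - exact: E.
  - by have := P j lt_j; case: j lt_j.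
split; [exact: (E 0) | exact: (P 0) |].
by apply/IH; split=> // [i /(E i.+1) | j /(P j.+1)] //; case: j.
Qed.

Lemma active_pathE D B Z a b vs ks :
  active_path D B Z a b vs ks <->
  exists2 vs', vs = a :: vs' & active_walk D B Z None a b vs' ks.
Proof.
split=> [[[s [h0 [hb E]]] C] | [vs' -> /(active_walkP _ _ _ a) [s E N P]]].
  case: vs s h0 hb E C => [|v vs] //= [s] h0 hb E C; subst v.
  exists vs => //; apply/(active_walkP _ _ _ a); split=> // -[|j] // lt_j_ks.
  by have := C j.+1 isT lt_j_ks; rewrite /collider /=; case: ifP.
split; first by split; [rewrite /= s | split].
move=> [|j] // _ lt_j_ks; have := P _ lt_j_ks.
by rewrite /collider /=; case: ifP.
Qed.

Section Shortcuts.
Variables D1 D2 B : {set 'I_n * 'I_n}.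
Hypothesis subD12 : D1 \subset D2.
Hypothesis D2_shortcut :
  forall u w, (u, w) \in D2 -> (u, w) \notin D1 -> shortcut D1 B u w.

Lemma connect_shortcut : connect (dedge D1) =2 connect (dedge D2).
Proof.
move=> u w; apply/idP/idP; apply: connect_sub => x y /= xy.
  by apply: connect1; apply: (subsetP subD12).
have [xyD1|/(D2_shortcut xy)/existsP[v /and3P[xv vy _]]] := boolP ((x, y) \in D1).
  exact: connect1.
by apply: connect_trans (connect1 xv) (connect1 vy).
Qed.

Lemma pass_ok_shortcut Z h k x : pass_ok D1 Z h k x <-> pass_ok D2 Z h k x.
Proof.
by case: h => //= hx; case: ifP => // _; split=> -[z Zz]; exists z;
  rewrite /descendant ?connect_shortcut // -connect_shortcut.
Qed.

Lemma active_walk_sub Z ks : forall h x b vs,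
  active_walk D1 B Z h x b vs ks -> active_walk D2 B Z h x b vs ks.
Proof.
elim: ks => [|k ks IH] h x b [|v vs] //= [e /pass_ok_shortcut p /IH w].
by split=> //; case: k e {p w} => //= /(subsetP subD12).
Qed.

Hypothesis symB : forall u w, (u, w) \in B -> (w, u) \in B.

Lemma active_walk_reroute Z ks : forall h x b vs,
  active_walk D2 B Z h x b vs ks -> exists vs' ks', active_walk D1 B Z h x b vs' ks'.
Proof.
elim: ks => [|k ks IH] h x b [|v vs] //=; first by move=> ->; exists [::], [::].
move=> [e /pass_ok_shortcut p /IH [vs' [ks' w]]].
have [e1|ne1] := boolP (edge_ok D1 B k x v); first by exists (v :: vs'), (k :: ks').
case: k e p ne1 w => //= [xv|vx|]; last by move=> ->.
- move=> p /(D2_shortcut xv)/existsP[c /and3P[xc cv Bcv]] w.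
  exists (c :: v :: vs'); have [Zc|nZc] := boolP (c \in Z).
  + exists (Fwd :: Bi :: ks'); split=> //; split=> //=.
    by exists c => //; apply: connect0.
  + by exists (Fwd :: Fwd :: ks'); split=> //; split=> //=; rewrite (negbTE nZc).
- move=> p /(D2_shortcut vx)/existsP[c /and3P[vc cx Bcx]] w.
  exists (c :: v :: vs'); have [Zc|nZc] := boolP (c \in Z).
  + exists (Bi :: Bwd :: ks'); split=> //=; first exact: symB.
    by split=> //; exists c => //; apply: connect0.
  + by exists (Bwd :: Bwd :: ks'); split=> //; split=> //=; rewrite (negbTE nZc).
Qed.

Lemma dsep_shortcut a b Z : dsep D1 B a b Z <-> dsep D2 B a b Z.
Proof.
split=> nsep [vs [ks /active_pathE [vs' _ w]]]; apply: nsep.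
  have [vs'' [ks'' w'']] := active_walk_reroute w.
  by exists (a :: vs''), ks''; apply/active_pathE; exists vs''.
by exists (a :: vs'), ks; apply/active_pathE; exists vs'; last exact: active_walk_sub.
Qed.

Lemma acyclic_shortcut : acyclic D1 -> acyclic D2.
Proof.
move=> acyc1 u w uw; rewrite -connect_shortcut; apply/negP => wu.
have [uwD1|/(D2_shortcut uw)/existsP[v /and3P[uv vw _]]] := boolP ((u, w) \in D1).
  by have /negP := acyc1 _ _ uwD1.
by have /negP := acyc1 _ _ uv; apply; apply: connect_trans (connect1 vw) wu.
Qed.
End Shortcuts.

Section Selection.
Variables D B : {set 'I_n * 'I_n}.
Hypothesis acycD : acyclic D.

Definition dspan (e : 'I_n * 'I_n) :=
  #|[set x | connect (dedge D) e.1 x && connect (dedge D) x e.2]|.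

Lemma dspan_lt u v w : (u, v) \in D -> (v, w) \in D ->
  dspan (u, v) < dspan (u, w) /\ dspan (v, w) < dspan (u, w).
Proof.
move=> uv vw; have cuv := connect1 (e := dedge D) uv.
have cvw := connect1 (e := dedge D) vw.
split; apply: proper_card; apply/properP; split.
- apply/subsetP=> x; rewrite !inE /= => /andP[-> xv] /=.
  exact: connect_trans xv cvw.
- exists w; rewrite !inE /= ?connect0 ?andbT; first exact: connect_trans cuv cvw.
  by rewrite (negbTE (acycD vw)) andbF.
- apply/subsetP=> x; rewrite !inE /= => /andP[vx ->]; rewrite andbT.
  exact: connect_trans cuv vx.
- exists u; rewrite !inE /= ?connect0 //=; first exact: connect_trans cuv cvw.
  by rewrite (negbTE (acycD uv)).
Qed.

(* Greedily keep a pair [(u, w)] of maximal span and discard the two edges of its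
   shortcut: these have smaller span, so no pair kept later uses [(u, w)] in its
   shortcut. *)
Lemma exists_shortcut_set Q : (forall q, q \in Q -> shortcut D B q.1 q.2) ->
  exists S, [/\ S \subset Q, #|Q| <= 3 * #|S| &
                forall s, s \in S -> shortcut (D :\: S) B s.1 s.2].
Proof.
elim: {Q}_.+1 {-2}Q (ltnSn #|Q|) => // N IH Q leQN shQ.
have [->|[q0 q0Q]] := set_0Vmem Q.
  by exists set0; rewrite sub0set cards0; split=> // s; rewrite inE.
have [[u w] uwQ max_uw] := @arg_maxnP _ q0 (mem Q) dspan q0Q.
have /existsP[v /and3P[uv vw Bvw]] := shQ _ uwQ.
have [lt_uv lt_vw] := dspan_lt uv vw.
have ne_uw e : dspan e < dspan (u, w) -> e != (u, w).
  by apply: contraTneq => ->; rewrite ltnn.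
set X := [set (u, w); (u, v); (v, w)]; set Q' := Q :\: X.
have [|q /setDP[/shQ //]|S' [sS'Q' cardQ' shS']] := IH Q'.
  rewrite -ltnS; apply: leq_trans leQN; apply: proper_card; apply/properP.
  by split; [apply: subsetDl | exists (u, w); rewrite // !inE eqxx].
have X_S' e : e \in X -> e \notin S'.
  by move=> eX; apply/negP => /(subsetP sS'Q'); rewrite inE eX.
have uwX : (u, w) \in X by rewrite !inE eqxx.
exists ((u, w) |: S'); split.
- by rewrite subUset sub1set (subset_trans sS'Q') ?subsetDl ?andbT.
- rewrite cardsU1 X_S' // mulnS -(cardsID X Q) leq_add //.
  exact: leq_trans (subset_leq_card (subsetIr _ _)) (cards3_le _ _ _).
move=> s; rewrite !inE => /predU1P[-> | sS'].
  apply/existsP; exists v; rewrite !inE /= uv vw Bvw !andbT !negb_or.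
  by rewrite !ne_uw ?X_S' // !inE eqxx ?orbT.
have /existsP[c /and3P[sc cs Bcs]] := shS' _ sS'.
have le_s : dspan s <= dspan (u, w).
  by apply/max_uw/(subsetP (subsetDl Q X))/(subsetP sS'Q').
move: sc cs; rewrite !inE => /andP[nsc sc] /andP[ncs cs].
have [lt_sc lt_cs] := dspan_lt sc cs.
apply/existsP; exists c; rewrite !inE /= !negb_or nsc ncs sc cs Bcs !andbT.
by rewrite !ne_uw // (leq_trans _ le_s) // -surjective_pairing.
Qed.
End Selection.

Lemma card_MEC_shortcut_set D B S : is_admg D B ->
  (forall s, s \in S -> shortcut (D :\: S) B s.1 s.2) -> 2 ^ #|S| <= #|MEC D B|.
Proof.
move=> [acycD [Bne symB]] shS; set D' := D :\: S.
have shortcutT T : T \subset S ->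
    forall u w, (u, w) \in D' :|: T -> (u, w) \notin D' -> shortcut D' B u w.
  by move=> sTS u w; rewrite inE => /orP[-> // | /(subsetP sTS)/shS].
have dsepT T : T \subset S -> forall a b Z, dsep D' B a b Z <-> dsep (D' :|: T) B a b Z.
  by move=> sTS; apply: dsep_shortcut (subsetUl _ _) (shortcutT T sTS) symB.
have defD : D = D' :|: (D :&: S) by rewrite setUC setID.
have inMEC T : T \subset S -> (D' :|: T, B) \in MEC D B.
  move=> sTS; rewrite inE; apply/asboolP; split=> [|a b Z _ /=].
    split=> //; apply: (acyclic_shortcut (subsetUl _ _) (shortcutT T sTS)).
    exact: acyclicS (subsetDl _ _) acycD.
  by rewrite {1}defD -!dsepT ?subsetIr.
have D'TK T : T \subset S -> (D' :|: T) :&: S = T.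
  move=> sTS; apply/setP=> e; rewrite !inE; case eS: (e \in S); rewrite ?andbF ?andbT //=.
  by apply/esym/negbTE; apply: contraFN (subsetP sTS e) eS.
have injT : {in powerset S &, injective (fun T => (D' :|: T, B))}.
  by move=> T1 T2; rewrite !inE => sT1 sT2 [eqT]; rewrite -(D'TK T1) // eqT D'TK.
rewrite -card_powerset -(card_in_imset injT); apply: subset_leq_card.
by apply/subsetP=> G /imsetP[T]; rewrite inE => sTS ->; apply: inMEC.
Qed.

Lemma triples_le_shortcut_pairs m D B (V : 'I_m -> {set 'I_n}) : injective V ->
  (forall i, exists a b c,
     V i = [set a; b; c] /\ (a, b) \in D /\ (b, c) \in D /\ (b, c) \in B) ->
  m <= #|[set e | shortcut D B e.1 e.2]| * n.
Proof.
move=> injV HV; set Q := [set e | _].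
pose Tr := [set t : 'I_n * 'I_n * 'I_n |
             [&& (t.1.1, t.2) \in D, (t.2, t.1.2) \in D & (t.2, t.1.2) \in B]].
have VTr : V @: setT \subset (fun t => [set t.1.1; t.2; t.1.2]) @: Tr.
  apply/subsetP=> _ /imsetP[i _ ->]; have [a [b [c [-> [ab [bc Bbc]]]]]] := HV i.
  by apply/imsetP; exists (a, c, b); rewrite // inE /= ab bc Bbc.
have TrQ : Tr \subset setX Q setT.
  by apply/subsetP=> -[[a c] b]; rewrite !inE /= andbT => wit; apply/existsP; exists b.
rewrite -{1}[m]card_ord -cardsT -(card_imset _ injV).
rewrite -[n in _ * n]card_ord -cardsT -cardsX.
apply: leq_trans (subset_leq_card VTr) _; apply: leq_trans (leq_imset_card _ _) _.
exact: subset_leq_card TrQ.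
Qed.
End Graphs.

Local Open Scope ring_scope.

Lemma powR_ratio_le (R : realType) (m k s : nat) : (m <= k * s)%N ->
  (2 : R) `^ (m%:R / k%:R) <= 2 ^+ s.
Proof.
case: k => [|k] le_m; first by rewrite invr0 mulr0 powRr0 exprn_ege1 ?ler1n.
rewrite -powR_mulrn ?ler0n // ler_powR ?ler1n //.
by rewrite ler_pdivrMr ?ltr0n // -natrM ler_nat mulnC.
Qed.

Theorem mainTheorem10 (R : realType) (n m : nat) (D B : {set 'I_n * 'I_n})
    (V : 'I_m -> {set 'I_n}) :
  is_admg D B ->
  injective V ->
  (forall i, #|V i| = 3%N /\
     exists a b c, V i = [set a; b; c] /\
       (a, b) \in D /\ (b, c) \in D /\ (b, c) \in B) ->
  (2 : R) `^ (m%:R / (3 * n)%:R) <= (#|MEC D B|)%:R.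
Proof.
move=> admgDB injV HV; set Q := [set e | shortcut D B e.1 e.2].
have [q|S [_ cardQ shS]] := @exists_shortcut_set _ D B admgDB.1 Q; first by rewrite inE.
have le_m : (m <= 3 * n * #|S|)%N.
  apply: leq_trans (triples_le_shortcut_pairs injV (fun i => (HV i).2)) _.
  by rewrite mulnAC leq_mul2r cardQ orbT.
apply: le_trans (powR_ratio_le R le_m) _.
by rewrite -natrX ler_nat card_MEC_shortcut_set.
Qed.
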